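(* Let ${\bf r}=(r_0,r_1,\dots)$ be a finitely supported sequence of nonnegative integers with $n=\sum_{d\ge1}r_d$, and let $k\ge0$ be an integer. Then $$|\mathcal{CF}_{{\bf r},k}|=\sum_{F\in\mathscr F({\bf r})}n!\prod_{v\in I(F)}\Big((d_v+k)-\frac{k}{h_v}\Big).$$
   Context: A plane tree is an unlabelled rooted tree in which the children of every vertex are linearly ordered; a plane forest is a finite linearly ordered sequence of plane trees. For vertices $u,v$ in a tree, $v$ is a descendant of $u$ if $u$ lies on the path from the root to $v$ (so $u$ is a descendant of itself). The degree $d_v$ is the number of children of $v$; $v$ is internal if $d_v\ge1$. $I(F)$ is the set of internal vertices of $F$. The hook length $h_v$ of an internal vertex $v$ is the number of internal vertices among the descendants of $v$ (including $v$). A plane forest has type ${\bf r}$ if it has exactly $r_i$ vertices of degree $i$ for all $i\ge0$; $\mathscr F({\bf r})$ is the set of such forests, and $n=\sum_{d\ge1}r_d$ is the number of internal vertices. A labelled forest is a plane forest $F$ together with a bijection (labelling) $I(F)\to[n]$. An internal vertex $v$ of a labelled forest is proper if no internal descendant of $v$ has a smaller label than $v$, and improper otherwise. Fix colors $c_1,c_2,\dots$ and distinct special colors $c_1',c_2',\dots$. A proper $k$-coloring of a labelled forest assigns to each internal vertex $v$ a color, taken from $\{c_1,\dots,c_{d_v}\}$ if $v$ is proper and from $\{c_1,\dots,c_{d_v}\}\cup\{c_1',\dots,c_k'\}$ if $v$ is improper. A $k$-colored labelled forest is a labelled forest together with a proper $k$-coloring; $\mathcal{CF}_{{\bf r},k}$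 is the set of $k$-colored labelled forests whose underlying plane forest has type ${\bf r}$. *)

From HB Require Import structures.
From mathcomp Require Import all_boot all_order all_algebra.
Set Implicit Arguments. Unset Strict Implicit. Unset Printing Implicit Defensive.
Import Order.TTheory GRing.Theory Num.Theory.

(** Plane trees: a vertex together with the (linearly ordered) list of
    its subtrees.  A plane forest is a [seq ptree]. *)
Inductive ptree := Node of seq ptree.

Fixpoint ptree_enc (t : ptree) : GenTree.tree unit :=
  let: Node ts := t in GenTree.Node 0 (map ptree_enc ts).
Fixpoint ptree_dec (g : GenTree.tree unit) : ptree :=
  match g with
  | GenTree.Leaf _ => Node [::]
  | GenTree.Node _ gs => Node (map ptree_dec gs)
  end.
Lemma ptree_encK : cancel ptree_enc ptree_dec.
Proof.
rewrite /cancel; fix IH 1; case=> ts /=; congr Node.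
elim: ts => [|t ts IHts] //=; by rewrite IH IHts.
Qed.
HB.instance Definition _ := Countable.copy ptree (can_type ptree_encK).

(** Vertices of a tree/forest are addressed by paths: a vertex of the forest
    [f] is [i :: p], where [i] is the index of its tree and [p] the list of
    child indices from the root.  [tverts]/[fverts] list all vertices in
    preorder, each paired with its degree (number of children). *)
Fixpoint tverts (t : ptree) : seq (seq nat * nat) :=
  let: Node ts := t in
  ([::], size ts) ::
  (fix go (i : nat) (ts : seq ptree) : seq (seq nat * nat) :=
     match ts with
     | [::] => [::]
     | t' :: ts' => [seq (i :: p.1, p.2) | p <- tverts t'] ++ go i.+1 ts'
     end) 0 ts.

Fixpoint fverts_from (i : nat) (f : seq ptree) : seq (seq nat * nat) :=
  match f with
  | [::] => [::]
  | t :: f' => [seq (i :: p.1, p.2) | p <- tverts t] ++ fverts_from i.+1 f'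
  end.

Definition fverts (f : seq ptree) := fverts_from 0 f.

(** Internal vertices I(F) (degree >= 1), in preorder. *)
Definition ivs (f : seq ptree) := [seq p <- fverts f | 0 < p.2].

(** u is an ancestor of v (v descendant of u, reflexive) iff the address of u
    is a prefix of the address of v.
    Hook length: number of internal descendants of the vertex at address a. *)
Definition hook (f : seq ptree) (a : seq nat) : nat :=
  count (fun p => prefix a p.1) (ivs f).

(** Type r (r_i = nth 0 r i, a finitely supported sequence). *)
Definition has_type (r : seq nat) (f : seq ptree) : Prop :=
  forall i, count (fun p => p.2 == i) (fverts f) = nth 0 r i.

Definition nint (r : seq nat) : nat := sumn (behead r).

Definition iaddr (f : seq ptree) (j : nat) := (nth ([::], 0) (ivs f) j).1.
Definition ideg (f : seq ptree) (j : nat) := (nth ([::], 0) (ivs f) j).2.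

(** A labelling of f is encoded as a list [lab] with [nth 0 lab j] the label
    of the j-th internal vertex; it is a bijection onto [n] = {1..n}
    iff [lab] is a permutation of [1..n] (and has size |I(F)|). *)
Definition proper (f : seq ptree) (lab : seq nat) (j : nat) : bool :=
  all (fun j' => prefix (iaddr f j) (iaddr f j') ==> (nth 0 lab j <= nth 0 lab j'))
      (iota 0 (size (ivs f))).

(** Colors: (i, false) is c_i and (i, true) is the special color c'_i
    (i >= 1).  A coloring is a list giving the color of the j-th internal
    vertex. *)
Definition color_ok (f : seq ptree) (lab : seq nat) (k j : nat) (c : nat * bool) : bool :=
  if c.2 then ~~ proper f lab j && (1 <= c.1 <= k)
  else 1 <= c.1 <= ideg f j.

Definition cforest := (seq ptree * seq nat * seq (nat * bool))%type.

Definition is_kcolored (r : seq nat) (k : nat) (x : cforest) : Prop :=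
  let: (f, lab, col) := x in
  [/\ has_type r f,
      size lab = size (ivs f),
      perm_eq lab (iota 1 (nint r)),
      size col = size (ivs f) &
      forall j, j < size col -> color_ok f lab k j (nth (0, false) col j)].

From Pilot Require Import Defs.
From HB Require Import structures.
From mathcomp Require Import all_boot all_order all_algebra.
From mathcomp Require Import zify.
Import Order.TTheory GRing.Theory Num.Theory.

(* A labelling of a forest is the same as an ordering of its
   internal vertices (the vertex labelled i is the i-th one), and a vertex is
   proper iff it comes first among its internal descendants.  For a fixed
   labelling, vertex v has d_v + k - k [v proper] admissible colors.
   Expanding the product of these numbers over the set S of vertices required
   to be proper, the sum over labellings becomes a sum over S of the number of
   orderings in which every vertex of S comes first in its subtree, which by
   the hook length formula for forests is n! / prod_(v in S) h_v.  Resumming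
   over S gives n! prod_v (d_v + k - k / h_v). *)

Set Implicit Arguments. Unset Strict Implicit. Unset Printing Implicit Defensive.

Lemma count_sum_nat (I : Type) (a : pred I) (r : seq I) :
  count a r = \sum_(i <- r) (a i : nat).
Proof. by rewrite -sum1_count big_mkcond /=; apply: eq_bigr => i _; case: (a i). Qed.

Lemma count_eq1 (I : eqType) (a : pred I) (r : seq I) x :
  uniq r -> x \in r -> a x -> {in r, forall y, a y -> y = x} -> count a r = 1.
Proof.
move=> ur xr ax H; rewrite (@eq_in_count _ _ (pred1 x)) ?count_uniq_mem ?xr //.
by move=> y yr /=; apply/idP/eqP => [/(H y yr) | ->].
Qed.

Section PrefixOrder.
Variable T : eqType.
Implicit Types x y v : seq T.

Lemma prefix_total x y v : prefix x v -> prefix y v -> prefix x y || prefix y x.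
Proof.
rewrite [prefix x v]prefixE [prefix y v]prefixE => /eqP ex /eqP ey.
case: (leqP (size x) (size y)) => h; apply/orP; [left | right]; rewrite prefixE.
  by rewrite -{1}ey take_takel // ex.
by rewrite -{1}ex take_takel ?ey // ltnW.
Qed.

Lemma prefix_size_lt x y : prefix x y -> x != y -> size x < size y.
Proof.
move=> pxy; apply: contraNT; rewrite -leqNgt => le_yx.
by move: pxy; rewrite prefixE take_oversize // eq_sym.
Qed.

End PrefixOrder.

Section HookLength.
Variable T : eqType.
Implicit Types (A s : seq (seq T)) (u v x : seq T).

Definition hook_of A u := count (prefix u) A.

Definition first_in_subtree A s u :=
  all (fun w => prefix u w ==> (index u s <= index w s)) A.

Lemma hook_of_gt0 A u : u \in A -> 0 < hook_of A u.
Proof.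
by move=> uA; rewrite /hook_of -has_count; apply/hasP; exists u => //; apply: prefix_refl.
Qed.

Variable S : pred (seq T).

Definition no_sel_ancestor A x := all (fun u => S u ==> ~~ prefix u x) (rem x A).

(* [sel_top A v x]: [x] is the topmost selected ancestor of [v], or [v]
   itself when [v] has no selected ancestor. *)
Definition sel_top A v x :=
  no_sel_ancestor A x && (if S x then prefix x v else x == v).

Definition sel_first_in_subtree A s := all (fun u => S u ==> first_in_subtree A s u) A.

Lemma no_sel_ancestorP A x : uniq A ->
  reflect (forall u, u \in A -> S u -> u != x -> ~~ prefix u x) (no_sel_ancestor A x).
Proof.
move=> uA; rewrite /no_sel_ancestor rem_filter //; apply: (iffP allP) => H.
  by move=> u uA' Su ux; have := H u; rewrite mem_filter /= ux uA' Su => /(_ isT).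
by move=> u; rewrite mem_filter /= => /andP[ux uA']; apply/implyP => Su; apply: H.
Qed.

Lemma no_sel_ancestorPn A x : uniq A -> ~~ no_sel_ancestor A x ->
  exists u, [/\ u \in A, S u, u != x & prefix u x].
Proof.
move=> uA; rewrite /no_sel_ancestor rem_filter // => /allPn[u].
by rewrite mem_filter negb_imply negbK => /andP[ux uA'] /andP[Su pu]; exists u.
Qed.

Lemma sel_top_uniq A v x y : uniq A -> x \in A -> y \in A ->
  sel_top A v x -> sel_top A v y -> x = y.
Proof.
move=> uA xA yA /andP[/(no_sel_ancestorP _ uA) nx Hx] /andP[/(no_sel_ancestorP _ uA) ny Hy].
case: (eqVneq x y) => // neq_xy; exfalso.
case Sx: (S x) Hx; case Sy: (S y) Hy => Hy Hx.
- case/orP: (prefix_total Hx Hy) => p.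
    by move: (ny x xA Sx neq_xy); rewrite p.
  by move: (nx y yA Sy); rewrite eq_sym neq_xy p => /(_ isT).
- by move/eqP: Hy => Hy; subst v; move: (ny x xA Sx neq_xy); rewrite Hx.
- by move/eqP: Hx => Hx; subst v; move: (nx y yA Sy); rewrite eq_sym neq_xy Hy => /(_ isT).
- by move: neq_xy; rewrite (eqP Hx) (eqP Hy) eqxx.
Qed.

Lemma exists_top_sel_ancestor A v y : uniq A -> y \in A -> S y -> prefix y v ->
  exists2 x, x \in A & [&& S x, prefix x v & no_sel_ancestor A x].
Proof.
move=> uA; have [m] := ubnP (size y); elim: m y => // m IH y /ltnSE le_y yA Sy pyv.
case na: (no_sel_ancestor A y); first by exists y => //; rewrite Sy pyv na.
have [u [uA' Su uy puy]] := no_sel_ancestorPn uA (negbT na).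
apply: (IH u) => //; last exact: prefix_trans puy pyv.
exact: leq_trans (prefix_size_lt puy uy) le_y.
Qed.

Lemma sel_top_exists A v : uniq A -> v \in A -> exists2 x, x \in A & sel_top A v x.
Proof.
move=> uA vA; case Sv: (S v).
  have [x xA /and3P[Sx pxv nx]] := exists_top_sel_ancestor uA vA Sv (prefix_refl v).
  by exists x; rewrite // /sel_top nx Sx.
case nv: (no_sel_ancestor A v); first by exists v; rewrite // /sel_top nv Sv eqxx.
have [u [uA' Su _ puv]] := no_sel_ancestorPn uA (negbT nv).
have [x xA /and3P[Sx pxv nx]] := exists_top_sel_ancestor uA uA' Su puv.
by exists x; rewrite // /sel_top nx Sx.
Qed.

(* Every vertex [v] is counted once, at its topmost selected ancestor. *)
Lemma sum_no_sel_ancestor A : uniq A ->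
  \sum_(x <- A) no_sel_ancestor A x * (if S x then hook_of A x else 1) = size A.
Proof.
move=> uA.
transitivity (\sum_(x <- A) \sum_(v <- A) (sel_top A v x : nat)).
  apply: eq_big_seq => x xA; rewrite /sel_top /hook_of.
  case: (no_sel_ancestor A x); last by rewrite mul0n big1.
  rewrite mul1n -count_sum_nat; case: (S x) => //.
  by rewrite (@count_eq1 _ _ _ x) ?eqxx // => y _ /eqP.
rewrite exchange_big /= -sum1_size; apply: eq_big_seq => v vA.
have [x xA topx] := sel_top_exists uA vA.
rewrite -count_sum_nat (count_eq1 uA xA topx) // => y yA topy.
exact: sel_top_uniq yA xA topy topx.
Qed.

Lemma sel_first_in_subtree_cons A x s : uniq A -> x \in A ->
  sel_first_in_subtree A (x :: s)
  = no_sel_ancestor A x && sel_first_in_subtree (rem x A) s.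
Proof.
move=> uA xA; rewrite /sel_first_in_subtree (perm_all _ (perm_to_rem xA)) /=.
have -> : first_in_subtree A (x :: s) x.
  by apply/allP => w _ /=; rewrite eqxx implybT.
rewrite /no_sel_ancestor -all_predI implybT /=; apply: eq_in_all => u uA'.
have ux : (u == x) = false.
  by apply: negbTE; move: uA'; rewrite rem_filter // mem_filter => /andP[].
rewrite /first_in_subtree (perm_all _ (perm_to_rem xA)) /= eq_sym ux eqxx /= ltn0 implybF.
case: (S u) => //=; congr andb; apply: eq_in_all => w wA' /=.
have wx : (w == x) = false.
  by apply: negbTE; move: wA'; rewrite rem_filter // mem_filter => /andP[].
by rewrite eq_sym wx ltnS.
Qed.

Lemma hook_of_rem A x u : uniq A -> x \in A -> no_sel_ancestor A x ->
  u \in rem x A -> S u -> hook_of (rem x A) u = hook_of A u.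
Proof.
move=> uA xA /(no_sel_ancestorP _ uA) nx u_rem Su.
have /andP[ux uA'] : (u != x) && (u \in A) by move: u_rem; rewrite rem_filter // mem_filter.
by rewrite /hook_of [in RHS](permP (perm_to_rem xA)) /= (negbTE (nx u uA' Su ux)).
Qed.

(* Induct on the first vertex [x] of the ordering: it has no selected proper
   ancestor, and removing it leaves the hooks of the selected vertices
   unchanged. *)
Lemma hook_length_formula A : uniq A ->
  count (sel_first_in_subtree A) (permutations A) * \prod_(u <- A | S u) hook_of A u
  = (size A)`!.
Proof.
move sA: (size A) => n; elim: n A sA => [|n IH] A sA uA.
  by move/size0nil: sA => ->; rewrite big_nil.
have sA0 : 0 < size A by rewrite sA.
rewrite (permP (permutationsE sA0)) undup_id // count_sum_nat big_allpairs_dep /=.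
rewrite factS -sA -(sum_no_sel_ancestor uA) !big_distrl /=.
apply: eq_big_seq => x xA; rewrite -count_sum_nat.
under eq_count => t do rewrite sel_first_in_subtree_cons //.
case nx: (no_sel_ancestor A x); last by rewrite count_pred0 !mul0n.
rewrite mul1n (perm_big _ (perm_to_rem xA)) big_cons.
have -> : \prod_(u <- rem x A | S u) hook_of A u
          = \prod_(u <- rem x A | S u) hook_of (rem x A) u.
  by rewrite big_seq_cond [RHS]big_seq_cond; apply: eq_bigr => u /andP[u_rem Su];
     rewrite hook_of_rem.
rewrite -(IH (rem x A)) ?size_rem ?sA ?rem_uniq //.
by case: (S x); rewrite ?mul1n // mulnCA.
Qed.

End HookLength.

Section WeightedOrderings.
Local Open Scope ring_scope.

Lemma prod_addr_expand (R : comPzSemiRingType) n (a c : 'I_n -> R) :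
  \prod_(j < n) (a j + c j)
  = \sum_(f : {ffun 'I_n -> bool}) \prod_(j < n) (if f j then c j else a j).
Proof.
rewrite -(bigA_distr_bigA (fun j (b : bool) => if b then c j else a j)) /=.
by apply: eq_bigr => j _; rewrite big_bool addrC.
Qed.

Lemma prod_if_mulr (R : comPzSemiRingType) (I : finType) (P : pred I) (a b d : I -> R) :
  \prod_i (if P i then b i * d i else a i)
  = \prod_i (if P i then b i else a i) * \prod_(i | P i) d i.
Proof.
rewrite [X in _ * X]big_mkcond -big_split /=.
by apply: eq_bigr => i _; case: (P i); rewrite ?mulr1.
Qed.

Lemma prod_nat_of_bool (I : finType) (P Q : pred I) :
  (\prod_(i | P i) (Q i : nat))%N = [forall i, P i ==> Q i].
Proof.
case: (boolP [forall i, P i ==> Q i]) => [/forallP allQ | /forallPn[i]].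
  by rewrite big1 // => i /(implyP (allQ i)) ->.
by rewrite negb_imply => /andP[Pi /negbTE Qi]; rewrite (bigD1 i) //= Qi.
Qed.

Lemma count_sel_first_in_subtree (R : numFieldType) (T : eqType) (S : pred (seq T))
    (A : seq (seq T)) : uniq A ->
  (count (sel_first_in_subtree S A) (permutations A))%:R
  = (size A)`!%:R / (\prod_(u <- A | S u) hook_of A u)%:R :> R.
Proof.
move=> uA; rewrite -(hook_length_formula S uA) natrM mulfK // pnatr_eq0 -lt0n.
by rewrite big_seq_cond prodn_cond_gt0 // => u /andP[uA' _]; apply: hook_of_gt0.
Qed.

(* Expand the product over the set of vertices required to come first in
   their subtree. *)
Lemma sum_perms_prod_first_in_subtree (R : numFieldType) (T : eqType) (A : seq (seq T))
    (a b : nat -> R) :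
  uniq A ->
  \sum_(s <- permutations A)
      \prod_(j < size A) (a j + b j * (first_in_subtree A s (nth [::] A j))%:R)
  = (size A)`!%:R * \prod_(j < size A) (a j + b j / (hook_of A (nth [::] A j))%:R).
Proof.
move=> uA; set n := size A.
under eq_bigr => s _ do rewrite prod_addr_expand.
rewrite exchange_big prod_addr_expand big_distrr /=; apply: eq_bigr => f _.
pose S u := [exists j : 'I_n, f j && (nth [::] A j == u)].
have S_nth (j : 'I_n) : S (nth [::] A j) = f j.
  apply/existsP/idP => [[i /andP[fi /eqP eq_ij]] | fj]; last by exists j; rewrite fj eqxx.
  suff -> : j = i by [].
  by apply/val_inj/eqP; rewrite -(nth_uniq [::] (ltn_ord j) (ltn_ord i) uA) eq_ij.
under eq_bigr => s _ do rewrite prod_if_mulr.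
rewrite prod_if_mulr -big_distrr mulrCA; congr (_ * _).
transitivity ((count (sel_first_in_subtree S A) (permutations A))%:R : R).
  rewrite count_sum_nat natr_sum; apply: eq_bigr => s _.
  rewrite -natr_prod prod_nat_of_bool; congr (nat_of_bool _)%:R.
  apply/forallP/allP => [fis u uA' | fis j]; apply/implyP.
    by case/existsP => j /andP[fj /eqP <-]; have /implyP := fis j; apply.
  by move=> fj; have /implyP := fis _ (mem_nth [::] (ltn_ord j)); rewrite S_nth; apply.
rewrite count_sel_first_in_subtree // (big_nth [::]) big_mkord -/n natr_prod prodfV.
by under eq_bigl => j do rewrite S_nth.
Qed.

End WeightedOrderings.

Lemma tvertsE ts : tverts (Node ts) = ([::], size ts) :: fverts ts.
Proof. by []. Qed.

Lemma ptree_mem_ind (P : ptree -> Prop) :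
  (forall ts, (forall t, t \in ts -> P t) -> P (Node ts)) -> forall t, P t.
Proof.
move=> IH; fix IHt 1; case=> ts; apply: IH.
(* No [by]/[done] here: it would try the not yet guarded [IHt]. *)
elim: ts => [|t ts IHts] u; first (rewrite in_nil => nil_mem; discriminate nil_mem).
rewrite inE => /orP[/eqP-> | ]; [exact: IHt | exact: IHts].
Qed.

Lemma fverts_from_head i f p : p \in fverts_from i f -> exists j a, p.1 = j :: a /\ i <= j.
Proof.
elim: f i => [|t f IH] i //=; rewrite mem_cat => /orP[/mapP[q _ ->] | /IH[j [a [-> le_ij]]]].
  by exists i, q.1.
by exists j, a; split => //; apply: ltnW.
Qed.

Lemma uniq_fverts_from_addr i f : (forall t, t \in f -> uniq (map fst (tverts t))) ->
  uniq (map fst (fverts_from i f)).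
Proof.
elim: f i => [|t f IH] i //= uf.
rewrite map_cat cat_uniq IH ?andbT; last by move=> u uf'; apply: uf; rewrite inE uf' orbT.
rewrite -map_comp (map_comp (cons i) fst) map_inj_uniq ?uf ?mem_head //=; last by move=> x y [].
apply/hasPn => _ /mapP[p pf ->] /=; apply/mapP => -[q _ /= e].
have [j [b [e' le_ij]]] := fverts_from_head pf; rewrite e' in e; case: e => e _.
by move: le_ij; rewrite -e ltnn.
Qed.

Lemma uniq_tverts_addr t : uniq (map fst (tverts t)).
Proof.
elim/ptree_mem_ind: t => ts IH; rewrite tvertsE /= uniq_fverts_from_addr // andbT.
by apply/mapP => -[p pf e]; have [j [a [e' _]]] := fverts_from_head pf; rewrite e' in e.
Qed.

Lemma uniq_ivs_addr F : uniq (map fst (ivs F)).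
Proof.
apply: subseq_uniq (uniq_fverts_from_addr 0 (fun t _ => uniq_tverts_addr t)).
exact/map_subseq/filter_subseq.
Qed.

Lemma size_fverts_from i f : size (fverts_from i f) = size (fverts f).
Proof.
rewrite /fverts; elim: f i => [|t f IH] i //=.
by rewrite !size_cat !size_map (IH i.+1) (IH 1).
Qed.

Lemma size_fverts_cons ts f :
  size (fverts (Node ts :: f)) = (size (fverts ts) + size (fverts f)).+1.
Proof. by rewrite /fverts /= size_cat size_map size_fverts_from. Qed.

Fixpoint forests_upto (m : nat) : seq (seq ptree) :=
  if m is m'.+1 then [::] :: [seq Node ts :: f | ts <- forests_upto m', f <- forests_upto m']
  else [:: [::]].

Lemma mem_forests_upto m f : size (fverts f) <= m -> f \in forests_upto m.
Proof.
elim: m f => [|m IH] [|[ts] f]; rewrite ?size_fverts_cons // => le_fm.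
by rewrite /= inE allpairs_f ?orbT // IH //; lia.
Qed.

Lemma has_type_deg_lt r F p : has_type r F -> p \in fverts F -> p.2 < size r.
Proof.
move=> tF pF; rewrite ltnNge; apply/negP => le_rp.
have := tF p.2; rewrite nth_default // => /eqP; rewrite -leqn0 leqNgt -has_count.
by move/hasP; apply; exists p.
Qed.

Lemma size_fverts_type r F : has_type r F -> size (fverts F) = sumn r.
Proof.
move=> tF; rewrite sumnE (big_nth 0) big_mkord.
under eq_bigr => i _ do rewrite -tF count_sum_nat.
rewrite exchange_big /= -sum1_size; apply: eq_big_seq => p pF.
rewrite (bigD1 (Ordinal (has_type_deg_lt tF pF))) //= eqxx big1 // => i ne_ip.
by case: eqP => // e; move: ne_ip; rewrite -val_eqE /= e eqxx.
Qed.

Lemma size_ivs_type r F : has_type r F -> size (ivs F) = nint r.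
Proof.
move=> tF; have := count_predC (fun p : seq nat * nat => p.2 == 0) (fverts F).
rewrite (size_fverts_type tF) tF /ivs size_filter /nint.
rewrite (@eq_count _ _ (predC (fun p : seq nat * nat => p.2 == 0))) => [|p];
  last by rewrite /= lt0n.
by case: r {tF} => [|r0 r] /=; lia.
Qed.

Definition has_typeb r F :=
  all (fun i => count (fun p => p.2 == i) (fverts F) == nth 0 r i) (iota 0 (size r))
  && all (fun p => p.2 < size r) (fverts F).

Lemma has_typeP r F : reflect (has_type r F) (has_typeb r F).
Proof.
apply: (iffP andP) => [[/allP counts /allP lt_deg] i | tF]; last first.
  split; first by apply/allP => i _; rewrite tF.
  by apply/allP => p /(has_type_deg_lt tF).
case: (ltnP i (size r)) => lt_ir; first by apply/eqP/counts; rewrite mem_iota.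
rewrite nth_default //; apply/eqP; rewrite -leqn0 leqNgt -has_count.
by apply/hasP => -[p /lt_deg lt_pr /eqP e]; move: lt_ir; rewrite -e leqNgt lt_pr.
Qed.

Definition forests_of_type r := undup (filter (has_typeb r) (forests_upto (sumn r))).

Lemma mem_forests_of_type r F : F \in forests_of_type r <-> has_type r F.
Proof.
rewrite mem_undup mem_filter; split => [/andP[/has_typeP //] | tF].
by rewrite (introT (has_typeP r F)) // mem_forests_upto // (size_fverts_type tF).
Qed.

Definition label_of_order (A s : seq (seq nat)) := [seq (index u s).+1 | u <- A].

Lemma iaddrE F j : iaddr F j = nth [::] (map fst (ivs F)) j.
Proof.
rewrite /iaddr; case: (ltnP j (size (ivs F))) => lt_j; first by rewrite (nth_map ([::], 0)).
by rewrite !nth_default ?size_map.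
Qed.

Lemma all_nth_iota (T : Type) (x0 : T) (P : pred T) (s : seq T) :
  all P s = all (fun j => P (nth x0 s j)) (iota 0 (size s)).
Proof. by rewrite -{1}(mkseq_nth x0 s) /mkseq all_map. Qed.

Lemma proper_label_of_order F s j : j < size (ivs F) ->
  Defs.proper F (label_of_order (map fst (ivs F)) s) j
  = first_in_subtree (map fst (ivs F)) s (nth [::] (map fst (ivs F)) j).
Proof.
set A := map fst (ivs F) => lt_j; have sA : size A = size (ivs F) by rewrite size_map.
rewrite /Defs.proper /first_in_subtree (all_nth_iota [::]) sA.
apply: eq_in_all => i; rewrite mem_iota add0n => lt_i /=.
by rewrite !iaddrE -/A /label_of_order !(nth_map [::]) ?sA // ltnS.
Qed.

Lemma map_index_uniq (T : eqType) (s : seq T) : uniq s -> map (index^~ s) s = iota 0 (size s).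
Proof.
case: s => [//|x0 s] us; apply: (@eq_from_nth _ 0); rewrite ?size_map ?size_iota // => i lt_i.
by rewrite (nth_map x0) ?nth_iota ?index_uniq.
Qed.

Lemma label_of_order_perm (A s : seq (seq nat)) : uniq A -> perm_eq s A ->
  perm_eq (label_of_order A s) (iota 1 (size A)).
Proof.
move=> uA sA; have us : uniq s by rewrite (perm_uniq sA).
rewrite /label_of_order (map_comp succn (index^~ s)) -(perm_size sA) -[1]/(1 + 0) iotaDl.
by rewrite -(map_index_uniq us); apply/perm_map/perm_map; rewrite perm_sym.
Qed.

Lemma label_of_order_inj (A : seq (seq nat)) : uniq A ->
  {in permutations A &, injective (label_of_order A)}.
Proof.
move=> uA s s'; rewrite !mem_permutations => sA s'A e.
have index_eq : {in A, forall u, index u s = index u s'}.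
  by move=> u uA'; move/eq_in_map: e => /(_ u uA') [].
apply: (@eq_from_nth _ [::]) => [|i lt_i]; first by rewrite (perm_size sA) (perm_size s'A).
have siA : nth [::] s i \in A by rewrite -(perm_mem sA) mem_nth.
rewrite -[i in RHS](index_uniq [::] lt_i) ?(perm_uniq sA) //.
by rewrite index_eq // nth_index // (perm_mem s'A).
Qed.

Lemma perm_label_orders (A : seq (seq nat)) : uniq A ->
  perm_eq (permutations (iota 1 (size A))) (map (label_of_order A) (permutations A)).
Proof.
move=> uA; have uniq_labels := map_inj_in_uniq (label_of_order_inj uA); rewrite (permutations_uniq A) in uniq_labels.
have sub : {subset map (label_of_order A) (permutations A)
              <= permutations (iota 1 (size A))}.
  by move=> x /mapP[s]; rewrite !mem_permutations => sA ->; apply: label_of_order_perm.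
have le_size : size (permutations (iota 1 (size A)))
               <= size (map (label_of_order A) (permutations A)).
  by rewrite size_map !size_permutations ?iota_uniq // size_iota.
have [_ eq_mem] := uniq_min_size uniq_labels sub le_size.
by apply: uniq_perm; rewrite ?permutations_uniq // => x; rewrite eq_mem.
Qed.

Definition palette F lab k j : seq (nat * bool) :=
  [seq (c, false) | c <- iota 1 (ideg F j)] ++
  (if Defs.proper F lab j then [::] else [seq (c, true) | c <- iota 1 k]).

Lemma mem_pair_const (s : seq nat) c (b b' : bool) :
  ((c, b) \in [seq (x, b') | x <- s]) = (b == b') && (c \in s).
Proof.
apply/mapP/andP => [[x xs [-> ->]] | [/eqP -> cs]]; first by rewrite eqxx.
by exists c.
Qed.

Lemma mem_palette F lab k j c : (c \in palette F lab k j) = color_ok F lab k j c.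
Proof.
case: c => c b; rewrite /palette /color_ok mem_cat /=.
case: b; case: (Defs.proper F lab j) => /=;
  rewrite ?in_nil ?orbF ?orFb !mem_pair_const ?mem_iota /= ?orbF //; apply/idP/idP; lia.
Qed.

Lemma uniq_palette F lab k j : uniq (palette F lab k j).
Proof.
rewrite /palette cat_uniq map_inj_uniq ?iota_uniq //=; last by move=> x y [].
case: (Defs.proper F lab j); rewrite /= ?andbT //.
rewrite map_inj_uniq ?iota_uniq ?andbT; last by move=> x y [].
by apply/hasPn => -[x b] /mapP[y _ [_ ->]]; rewrite mem_pair_const.
Qed.

Lemma size_palette F lab k j :
  size (palette F lab k j) = ideg F j + (if Defs.proper F lab j then 0 else k).
Proof.
rewrite /palette size_cat size_map size_iota.
by case: (Defs.proper F lab j); rewrite //= size_map size_iota.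
Qed.

Fixpoint choices (T : Type) (Ls : seq (seq T)) : seq (seq T) :=
  if Ls is L :: Ls' then [seq c :: t | c <- L, t <- choices Ls'] else [:: [::]].

Lemma size_choices (T : Type) (Ls : seq (seq T)) : size (choices Ls) = \prod_(L <- Ls) size L.
Proof. by elim: Ls => [|L Ls IH]; rewrite ?big_nil ?big_cons //= size_allpairs IH. Qed.

Lemma uniq_choices (T : eqType) (Ls : seq (seq T)) : all uniq Ls -> uniq (choices Ls).
Proof.
elim: Ls => [|L Ls IH] //= /andP[uL uLs]; apply: allpairs_uniq => //; first exact: IH.
by move=> [x t] [y u] _ _ /= [-> ->].
Qed.

Lemma mem_choices (T : eqType) (x0 : T) (Ls : seq (seq T)) t : (t \in choices Ls) =
  (size t == size Ls) && all (fun j => nth x0 t j \in nth [::] Ls j) (iota 0 (size t)).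
Proof.
elim: Ls t => [|L Ls IH] [|c t] //=; first by apply/negbTE/allpairsP => -[[x u] [_ _]].
rewrite eqSS -[1]/(1 + 0) iotaDl all_map.
apply/allpairsP/idP => [[[x u] /= [xL uc [-> ->]]] | /and3P[st cL H]].
  by move: uc; rewrite IH xL => /andP[-> H].
by exists (c, t); split; rewrite //= IH st.
Qed.

Definition colorings F lab k := choices [seq palette F lab k j | j <- iota 0 (size (ivs F))].

Lemma nth_palettes F lab k j : j < size (ivs F) ->
  nth [::] [seq palette F lab k j | j <- iota 0 (size (ivs F))] j = palette F lab k j.
Proof. by move=> lt_j; rewrite (nth_map 0) ?size_iota ?nth_iota. Qed.

Section ColoringCount.
Local Open Scope ring_scope.

(* The [j]-th internal vertex has [d_j + k - k * [j proper]] admissible colors. *)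
Lemma sum_size_colorings F k :
  \sum_(lab <- permutations (iota 1 (size (ivs F)))) (size (colorings F lab k))%:R
  = (size (ivs F))`!%:R * \prod_(v <- ivs F) ((v.2 + k)%:R - k%:R / (hook F v.1)%:R)
  :> rat.
Proof.
set A := map fst (ivs F); have sA : size A = size (ivs F) by rewrite size_map.
rewrite -sA (perm_big _ (perm_label_orders (uniq_ivs_addr F))) big_map.
rewrite (big_nth ([::], 0)) big_mkord -/A.
transitivity (\sum_(s <- permutations A) \prod_(j < size A)
   ((ideg F j + k)%:R - k%:R * (first_in_subtree A s (nth [::] A j))%:R : rat)).
  apply: eq_bigr => s _; rewrite size_choices big_map natr_prod.
  have -> : iota 0 (size (ivs F)) = index_iota 0 (size A) by rewrite /index_iota subn0 sA.
  rewrite big_mkord.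
  apply: eq_bigr => j _; rewrite size_palette proper_label_of_order -?sA // -/A.
  by case: first_in_subtree; rewrite ?natrD ?addn0 ?mulr1 ?mulr0 ?subr0 ?addrK.
under eq_bigr => s _ do under eq_bigr => j _ do rewrite -mulNr.
rewrite (sum_perms_prod_first_in_subtree (fun j => (ideg F j + k)%:R) (fun=> - k%:R))
  ?uniq_ivs_addr // sA; congr (_ * _).
apply: eq_bigr => j _; rewrite mulNr /ideg /hook /hook_of /A count_map.
by rewrite (nth_map ([::], 0)) -?sA.
Qed.

End ColoringCount.

Definition labelled_forests r :=
  [seq (F, lab) | F <- forests_of_type r, lab <- permutations (iota 1 (nint r))].

Definition kcolored_forests r k : seq cforest :=
  [seq (x, col) | x <- labelled_forests r, col <- colorings x.1 x.2 k].

Lemma uniq_kcolored_forests r k : uniq (kcolored_forests r k).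
Proof.
apply: allpairs_uniq_dep.
- apply: allpairs_uniq; rewrite ?undup_uniq ?permutations_uniq //.
  by move=> [? ?] [? ?] _ _ /= [-> ->].
- move=> x _; apply: uniq_choices; apply/allP => _ /mapP[j _ ->]; exact: uniq_palette.
- by move=> [x c] [y d] _ _ /= [<- ->].
Qed.

Lemma mem_kcolored_forests r k x : x \in kcolored_forests r k <-> is_kcolored r k x.
Proof.
case: x => [[F lab] col]; split.
- case/allpairsPdep => -[F' lab'] [c [/allpairsP[[F'' lab''] [/= tF lab_perm [e1 e2]]] c_col [e3 e4]]].
  subst.
  move/mem_forests_of_type: tF => tF; move: lab_perm; rewrite mem_permutations => lab_perm.
  move: c_col; rewrite (mem_choices (0, false)) size_map size_iota => /andP[/eqP sc /allP c_ok].
  move=> ->; split=> //; first by rewrite (perm_size lab_perm) size_iota (size_ivs_type tF).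
  move=> j lt_j; rewrite -mem_palette -nth_palettes; last by rewrite -sc.
  by apply: c_ok; rewrite mem_iota.
- case=> tF s_lab lab_perm s_col col_ok; apply/allpairsPdep; exists (F, lab), col; split => //.
    by apply: allpairs_f; rewrite ?mem_permutations // mem_forests_of_type.
  rewrite (mem_choices (0, false)) size_map size_iota s_col eqxx /=; apply/allP => j.
  rewrite mem_iota add0n => /andP[_ lt_j] /=.
  by rewrite nth_palettes // mem_palette col_ok // s_col.
Qed.

Theorem lemma3p1 (r : seq nat) (k : nat) :
  exists (sF : seq (seq ptree)) (sC : seq cforest),
    [/\ uniq sF,
        (forall F, F \in sF <-> has_type r F),
        uniq sC,
        (forall x, x \in sC <-> is_kcolored r k x) &
        ((size sC)%:R =
           \sum_(F <- sF) ((nint r)`!)%:R *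
              \prod_(v <- ivs F)
                 (((v.2 + k)%:R - k%:R / (hook F v.1)%:R) : rat))%R].
Proof.
exists (forests_of_type r), (kcolored_forests r k); split.
- exact: undup_uniq.
- exact: mem_forests_of_type.
- exact: uniq_kcolored_forests.
- exact: mem_kcolored_forests.
rewrite size_allpairs_dep sumnE big_map big_allpairs natr_sum.
rewrite big_seq [RHS]big_seq; apply: eq_bigr => F /mem_forests_of_type tF /=.
by rewrite natr_sum -(size_ivs_type tF) -sum_size_colorings.
Qed.
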